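(* Let $0<p\le2$ and let $G$ be the additive group of finitely supported real sequences $r=(r_i)_{i\in\mathbb{N}}$. The function $r\mapsto\|r\|_p^p=\sum_i|r_i|^p$ from $G$ to $\mathbb{R}_+$ is a morphism on an arbitrary large subset of $G$: for every $N,M\in\mathbb{N}$ and every $s_1,\dots,s_M\in\mathbb{R}_+$ there exist $g_{n,k}\in G$ ($1\le n\le N$, $1\le k\le M$) such that $\|g_{m,k}-g_{n,j}\|_p^p=s_j+s_k$ for all $j,k$ and all $n\ne m$.
   Context: $\mathbb{R}_+=[0,\infty)$. The paper denotes this group by $\mathbb{R}^{\mathbb{N}}$ (countably many copies of $\mathbb{R}$, elements having finitely many nonzero coordinates), with group operation coordinatewise addition. *)

From Stdlib Require Import Reals Lra Lia.
From Coquelicot Require Import Coquelicot.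
Open Scope R_scope.

Definition finsupp (r : nat -> R) : Prop :=
  exists L : nat, forall i : nat, (L <= i)%nat -> r i = 0.

(* |x|^p with the convention 0^p = 0 (p > 0). *)
Definition abspow (x p : R) : R :=
  if Req_EM_T x 0 then 0 else Rpower (Rabs x) p.

Definition lp_pow (p : R) (r : nat -> R) : R :=
  Series (fun i => abspow (r i) p).

(** Taking [g n k] to be [s k ^ (1/p)] times the unit vector of a coordinate
    reserved for the pair [(n, k)], the difference [g m k - g n j] with
    [n <> m] has exactly two nonzero coordinates, of absolute values
    [s k ^ (1/p)] and [s j ^ (1/p)], so its [p]-th power norm is [s j + s k].
    This works for every [p > 0]. *)

From Stdlib Require Import Reals Lra Lia.
From Coquelicot Require Import Coquelicot.
Open Scope R_scope.

Definition basis_vec (a : nat) (x : R) : nat -> R :=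
  fun i => if Nat.eqb i a then x else 0.

Lemma finsupp_basis_vec (a : nat) (x : R) : finsupp (basis_vec a x).
Proof.
  exists (S a). intros i Hi. unfold basis_vec.
  destruct (Nat.eqb_spec i a); [lia | reflexivity].
Qed.

Lemma sum_n_basis_vec (a : nat) (x : R) (n : nat) :
  (a <= n)%nat -> sum_n (basis_vec a x) n = x.
Proof.
  induction n as [|n IH]; intro Han.
  - rewrite sum_O. unfold basis_vec. replace a with 0%nat by lia. reflexivity.
  - rewrite sum_Sn. change plus with Rplus. unfold basis_vec at 2.
    destruct (Nat.eqb_spec (S n) a) as [E|E].
    + subst a. rewrite (sum_n_ext_loc _ (fun _ => 0)).
      * rewrite sum_n_const. lra.
      * intros i Hi. unfold basis_vec. destruct (Nat.eqb_spec i (S n)); [lia | reflexivity].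
    + rewrite IH by lia. lra.
Qed.

Lemma is_series_basis_vec (a : nat) (x : R) : is_series (basis_vec a x) x.
Proof.
  change (is_lim_seq (sum_n (basis_vec a x)) x).
  apply (is_lim_seq_ext_loc (fun _ => x)).
  - exists a. intros n Hn. symmetry. now apply sum_n_basis_vec.
  - apply is_lim_seq_const.
Qed.

Lemma abspow_0 (p : R) : abspow 0 p = 0.
Proof. unfold abspow. destruct (Req_EM_T 0 0); [reflexivity | contradiction]. Qed.

Lemma abspow_opp (x p : R) : abspow (- x) p = abspow x p.
Proof.
  unfold abspow. destruct (Req_EM_T (- x) 0), (Req_EM_T x 0); try lra.
  now rewrite Rabs_Ropp.
Qed.

Lemma lp_pow_ext (p : R) (r r' : nat -> R) :
  (forall i, r i = r' i) -> lp_pow p r = lp_pow p r'.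
Proof. intro E. unfold lp_pow. apply Series_ext. intro i. now rewrite E. Qed.

Lemma lp_pow_two_basis_vec (p : R) (a b : nat) (x y : R) : a <> b ->
  lp_pow p (fun i => basis_vec a x i + basis_vec b y i) = abspow x p + abspow y p.
Proof.
  intro Hab. unfold lp_pow.
  rewrite (Series_ext _ (fun i => basis_vec a (abspow x p) i + basis_vec b (abspow y p) i)).
  - apply is_series_unique. apply (is_series_plus _ _ (abspow x p) (abspow y p));
      apply is_series_basis_vec.
  - intro i. unfold basis_vec.
    destruct (Nat.eqb_spec i a), (Nat.eqb_spec i b); subst;
      rewrite ?Rplus_0_l, ?Rplus_0_r, ?abspow_0; easy.
Qed.

(** [Rpower 0 (/ p)] is [exp 0 = 1], hence the case split at [0]. *)
Definition pow_root (p s : R) : R := if Rlt_dec 0 s then Rpower s (/ p) else 0.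

Lemma abspow_pow_root (p s : R) : 0 < p -> 0 <= s -> abspow (pow_root p s) p = s.
Proof.
  intros Hp Hs. unfold pow_root. destruct (Rlt_dec 0 s) as [Hs0|Hs0].
  - assert (Hpos : 0 < Rpower s (/ p)) by apply exp_pos.
    unfold abspow. destruct (Req_EM_T (Rpower s (/ p)) 0); [lra|].
    rewrite Rabs_right, Rpower_mult by lra.
    replace (/ p * p) with 1 by (field; lra). now apply Rpower_1.
  - rewrite abspow_0. lra.
Qed.

Definition pair_index (M n k : nat) : nat := (n * S M + k)%nat.

Lemma pair_index_inj_l (M n m k j : nat) : (k <= M)%nat -> (j <= M)%nat ->
  pair_index M n k = pair_index M m j -> n = m.
Proof.
  unfold pair_index. intros Hk Hj E.
  assert (Hdiv : forall r c, (c <= M)%nat -> ((r * S M + c) / S M)%nat = r).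
  { intros r c Hc. rewrite Nat.div_add_l, Nat.div_small by lia. lia. }
  rewrite <- (Hdiv n k Hk), <- (Hdiv m j Hj). now f_equal.
Qed.

Theorem proposition4p11 :
  forall p : R, 0 < p <= 2 ->
  forall (N M : nat) (s : nat -> R),
    (forall k : nat, (1 <= k <= M)%nat -> 0 <= s k) ->
    exists g : nat -> nat -> (nat -> R),
      (forall n k : nat, (1 <= n <= N)%nat -> (1 <= k <= M)%nat ->
         finsupp (g n k)) /\
      (forall n m j k : nat,
         (1 <= n <= N)%nat -> (1 <= m <= N)%nat ->
         (1 <= j <= M)%nat -> (1 <= k <= M)%nat -> n <> m ->
         lp_pow p (fun i => g m k i - g n j i) = s j + s k).
Proof.
  intros p Hp N M s Hs.
  exists (fun n k => basis_vec (pair_index M n k) (pow_root p (s k))).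
  split.
  - intros n k _ _. apply finsupp_basis_vec.
  - intros n m j k _ _ Hj Hk Hnm.
    assert (Hidx : pair_index M m k <> pair_index M n j).
    { intro E. apply Hnm. symmetry. apply (pair_index_inj_l M m n k j); lia. }
    rewrite (lp_pow_ext p _ (fun i => basis_vec (pair_index M m k) (pow_root p (s k)) i
                                + basis_vec (pair_index M n j) (- pow_root p (s j)) i)).
    2:{ intro i. unfold basis_vec. destruct (Nat.eqb _ _), (Nat.eqb _ _); lra. }
    rewrite lp_pow_two_basis_vec, abspow_opp, !abspow_pow_root by (lia || lra || apply Hs; lia).
    lra.
Qed.
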